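(* Let $\mathcal{X} \subseteq \mathbb{R}^n$ and let $d$ be a distance (metric) on $\mathcal{X}$. Let $\mathcal{P} = \{(x_i, y_i)\}_{i=1}^N$ be a finite labeled training set with $x_i \in \mathcal{X}$, which is linearly separable, and let $L$ be the max-margin linear classifier trained on $\mathcal{P}$. Let $\epsilon > 0$ and suppose that for any two data points $x_i, x_j$ of $\mathcal{P}$, $d(x_i, x_j) > 2\epsilon$ whenever $y_i \neq y_j$. Let $b$ be the nearest-neighbor binarizer $b(x) \in \arg\min_{z \in \mathcal{P}} d(x,z)$ (where $z$ ranges over the data points $x_1,\dots,x_N$), and define the augmented classifier $C(x) = L(b(x))$. Then $C$ is robust over $\mathcal{P}$ with respect to $\epsilon$, and $C$ is exact on the $\epsilon$-neighborhoods of the points of $\mathcal{P}$, i.e. for every $i$ and every $z \in B(x_i,\epsilon)$, $C(z) = y_i$.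
   Context: For $x \in \mathcal{X}$ and $\epsilon>0$, $B(x,\epsilon) = \{z \in \mathcal{X} : d(x,z) \le \epsilon\}$. A function $F$ defined on $\mathcal{X}$ is robust over a subset $\mathcal{Q} \subseteq \mathcal{X}$ with respect to $\epsilon>0$ if for all $x \in \mathcal{Q}$ and all $z \in B(x,\epsilon)$, $F(z) = F(x)$. ''Exact'' means no classification errors. *)

From HB Require Import structures.
From mathcomp Require Import all_boot all_order all_algebra.
From mathcomp Require Import reals.
Set Implicit Arguments. Unset Strict Implicit. Unset Printing Implicit Defensive.
Import Order.TTheory GRing.Theory Num.Theory.
Local Open Scope ring_scope.

Definition dotv (R : realType) (n : nat) (u v : 'rV[R]_n) : R :=
  \sum_(k < n) u ord0 k * v ord0 k.

Definition is_metric_on (R : realType) (n : nat)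
  (X : 'rV[R]_n -> Prop) (d : 'rV[R]_n -> 'rV[R]_n -> R) : Prop :=
  (forall x y, X x -> X y -> 0 <= d x y) /\
  (forall x y, X x -> X y -> (d x y = 0 <-> x = y)) /\
  (forall x y, X x -> X y -> d x y = d y x) /\
  (forall x y z, X x -> X y -> X z -> d x z <= d x y + d y z).

Definition binary_labels (R : realType) (N : nat) (y : 'I_N -> R) : Prop :=
  forall i, y i = 1 \/ y i = -1.

Definition linearly_separable (R : realType) (n N : nat)
  (xs : 'I_N -> 'rV[R]_n) (y : 'I_N -> R) : Prop :=
  exists (w : 'rV[R]_n) (beta : R), forall i, 0 < y i * (dotv w (xs i) + beta).

Definition margin_feasible (R : realType) (n N : nat)
  (xs : 'I_N -> 'rV[R]_n) (y : 'I_N -> R) (w : 'rV[R]_n) (beta : R) : Prop :=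
  forall i, 1 <= y i * (dotv w (xs i) + beta).

(* (w, beta) is an optimal solution of the hard-margin (max-margin) SVM:
   minimize |w|^2 subject to y_i (w.x_i + beta) >= 1 for all i. *)
Definition is_max_margin (R : realType) (n N : nat)
  (xs : 'I_N -> 'rV[R]_n) (y : 'I_N -> R) (w : 'rV[R]_n) (beta : R) : Prop :=
  margin_feasible xs y w beta /\
  forall w' beta', margin_feasible xs y w' beta' -> dotv w w <= dotv w' w'.

Definition linear_classifier (R : realType) (n : nat) (w : 'rV[R]_n) (beta : R)
  (x : 'rV[R]_n) : R :=
  if 0 <= dotv w x + beta then 1 else -1.

Definition is_nn_binarizer (R : realType) (n N : nat) (X : 'rV[R]_n -> Prop)
  (d : 'rV[R]_n -> 'rV[R]_n -> R) (xs : 'I_N -> 'rV[R]_n)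
  (b : 'rV[R]_n -> 'rV[R]_n) : Prop :=
  forall x, X x -> (exists j, b x = xs j) /\ (forall j, d x (b x) <= d x (xs j)).

Definition ball_in (R : realType) (n : nat) (X : 'rV[R]_n -> Prop)
  (d : 'rV[R]_n -> 'rV[R]_n -> R) (x : 'rV[R]_n) (eps : R) : 'rV[R]_n -> Prop :=
  fun z => X z /\ d x z <= eps.

Definition robust_over (R : realType) (n : nat) (X : 'rV[R]_n -> Prop)
  (d : 'rV[R]_n -> 'rV[R]_n -> R) (F : 'rV[R]_n -> R)
  (Q : 'rV[R]_n -> Prop) (eps : R) : Prop :=
  forall x, Q x -> forall z, ball_in X d x eps z -> F z = F x.

From HB Require Import structures.
From mathcomp Require Import all_boot all_order all_algebra.
From mathcomp Require Import reals.
Import Order.TTheory GRing.Theory Num.Theory.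
Local Open Scope ring_scope.

(* Feasibility of the max-margin solution already makes L correct on every data
   point.
   If z lies within eps of x_i and its nearest data point is x_j, the triangle
   inequality gives d(x_i, x_j) <= d(x_i, z) + d(z, x_j) <= 2 d(x_i, z) <= 2 eps,
   so the separation hypothesis forces y_j = y_i, hence C z = L x_j = y_i.
   Robustness follows because every data point lies in its own ball. *)

Lemma linear_classifier_sign {R : realType} {n : nat} {w x : 'rV[R]_n}
    {beta s : R} :
  s = 1 \/ s = -1 -> 0 < s * (dotv w x + beta) -> linear_classifier w beta x = s.
Proof.
rewrite /linear_classifier => -[|] ->.
  by rewrite mul1r => /ltW ->.
by rewrite mulN1r oppr_gt0 => /lt_geF ->.
Qed.

Lemma margin_feasible_classifier {R : realType} {n N : nat}
    {xs : 'I_N -> 'rV[R]_n} {y : 'I_N -> R} {w : 'rV[R]_n} {beta : R} :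
  binary_labels y -> margin_feasible xs y w beta ->
  forall j, linear_classifier w beta (xs j) = y j.
Proof.
move=> ylab feas j; apply: linear_classifier_sign (ylab j) _.
exact: lt_le_trans ltr01 (feas j).
Qed.

Section NearestNeighbourBinarizer.

Context {R : realType} {n N : nat} {X : 'rV[R]_n -> Prop}.
Context {d : 'rV[R]_n -> 'rV[R]_n -> R} {xs : 'I_N -> 'rV[R]_n}.
Context {b : 'rV[R]_n -> 'rV[R]_n}.

Hypothesis metric_d : is_metric_on X d.
Hypothesis X_xs : forall i, X (xs i).
Hypothesis nn_b : is_nn_binarizer X d xs b.

Lemma ball_in_center x eps : X x -> 0 <= eps -> ball_in X d x eps x.
Proof.
move: metric_d => [_ [d_eq0 _]] Xx eps_ge0; split => //.
by rewrite (proj2 (d_eq0 x x Xx Xx) erefl).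
Qed.

Lemma nn_binarizer_dist_le {i eps z} :
  ball_in X d (xs i) eps z -> d (xs i) (b z) <= 2 * eps.
Proof.
move: metric_d => [_ [_ [d_sym d_tri]]] [Xz dist_iz].
have [[j bz] bz_min] := nn_b z Xz.
have dist_zb : d z (b z) <= eps.
  by apply: le_trans (bz_min i) _; rewrite d_sym.
rewrite bz in dist_zb *.
apply: le_trans (d_tri _ _ _ (X_xs i) Xz (X_xs j)) _.
by rewrite mulr2n mulrDl mul1r lerD.
Qed.

Lemma nn_augmented_exact {T : eqType} {y : 'I_N -> T} {F : 'rV[R]_n -> T}
    {eps i z} :
  (forall j, F (xs j) = y j) ->
  (forall i j, y i != y j -> 2 * eps < d (xs i) (xs j)) ->
  ball_in X d (xs i) eps z -> F (b z) = y i.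
Proof.
move=> F_xs sep z_ball; have [[j bz] _] := nn_b z (proj1 z_ball).
rewrite bz F_xs; case: (eqVneq (y i) (y j)) => [-> //|/sep].
by rewrite -bz ltNge (nn_binarizer_dist_le z_ball).
Qed.

Lemma exact_on_balls_robust {y : 'I_N -> R} {G : 'rV[R]_n -> R} {eps} :
  0 <= eps -> (forall i z, ball_in X d (xs i) eps z -> G z = y i) ->
  robust_over X d G (fun x => exists i, x = xs i) eps.
Proof.
move=> eps_ge0 G_exact _ [i ->] z z_ball.
by rewrite (G_exact i z z_ball) (G_exact i) //; apply: ball_in_center.
Qed.

End NearestNeighbourBinarizer.

Theorem theorem1 (R : realType) (n N : nat)
  (X : 'rV[R]_n -> Prop) (d : 'rV[R]_n -> 'rV[R]_n -> R)
  (xs : 'I_N -> 'rV[R]_n) (y : 'I_N -> R)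
  (w : 'rV[R]_n) (beta : R) (eps : R) (b : 'rV[R]_n -> 'rV[R]_n) :
  is_metric_on X d ->
  (forall i, X (xs i)) ->
  binary_labels y ->
  linearly_separable xs y ->
  is_max_margin xs y w beta ->
  0 < eps ->
  (forall i j, y i != y j -> 2 * eps < d (xs i) (xs j)) ->
  is_nn_binarizer X d xs b ->
  let C := fun x => linear_classifier w beta (b x) in
  robust_over X d C (fun x => exists i, x = xs i) eps /\
  (forall i z, ball_in X d (xs i) eps z -> C z = y i).
Proof.
move=> metric_d X_xs ylab _ [feas _] eps_gt0 sep nn_b C.
have C_exact i z : ball_in X d (xs i) eps z -> C z = y i.
  exact: (nn_augmented_exact metric_d X_xs nn_b
           (margin_feasible_classifier ylab feas) sep).
split=> //; exact: (exact_on_balls_robust metric_d X_xs (ltW eps_gt0) C_exact).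
Qed.
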